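(* Let $X$ and $\Lambda$ be finite sets; for each $\lambda\in\Lambda$ let $G_\lambda$ be a finite group and $\rho_\lambda\colon X\to G_\lambda^\sharp$ a map. Let $\mathcal Z$ be a set of subsets of $\Lambda$. Let $\Delta(X,\rho,\mathcal Z)\ge0$ be the least real number such that \[\sum_{D\in\mathcal Z}\sum_{\chi\in\operatorname{Prim}(G_D)}\Big|\sum_{v\in X}a_v\chi(\rho_D(v))\Big|^2\le\Delta(X,\rho,\mathcal Z)\sum_{v\in X}|a_v|^2\] for every sequence $(a_v)_{v\in X}$ of complex numbers. Let $\mathscr S\subseteq X$, and for each $\lambda\in\Lambda$ fix a real number $0<\delta_\lambda\le1$ with $\mu_\lambda(\rho_\lambda(\mathscr S))\le\delta_\lambda$. Define \[L(\mathcal Z)=\sum_{D\in\mathcal Z}\prod_{\lambda\in D}\frac{1-\delta_\lambda}{\delta_\lambda}.\] Then $L(\mathcal Z)\,|\mathscr S|\le\Delta(X,\rho,\mathcal Z)$.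
   Context: For a finite group $G$, $G^\sharp$ denotes its set of conjugacy classes and $\operatorname{Irr}(G)$ the set of characters of irreducible complex representations of $G$. $\mu_\lambda$ is the probability measure on $G_\lambda^\sharp$ given by $\mu_\lambda(U)=|G_\lambda|^{-1}\sum_{C\in U}|C|$ for $U\subseteq G_\lambda^\sharp$. For $D\subseteq\Lambda$, $G_D=\prod_{\lambda\in D}G_\lambda$ (with $G_\emptyset$ trivial), and $\rho_D\colon X\to G_D^\sharp$ sends $v$ to the conjugacy class $\prod_{\lambda\in D}\rho_\lambda(v)$. For $E\subseteq D$, composition with the projection $G_D\to G_E$ gives an injection $\operatorname{Irr}(G_E)\hookrightarrow\operatorname{Irr}(G_D)$; a character $\chi\in\operatorname{Irr}(G_D)$ is imprimitive if it comes from $\operatorname{Irr}(G_E)$ for some proper subset $E\subsetneq D$, and primitive otherwise. $\operatorname{Prim}(G_D)$ is the set of primitive characters in $\operatorname{Irr}(G_D)$ (so $\operatorname{Prim}(G_\emptyset)=\{1\}$). Characters are evaluated on conjugacy classes in the obvious way. *)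

From HB Require Import structures.
From mathcomp Require Import all_boot all_order all_algebra all_fingroup all_solvable all_field all_character.
Set Implicit Arguments. Unset Strict Implicit. Unset Printing Implicit Defensive.
Import Order.TTheory GRing.Theory Num.Theory.
Local Open Scope ring_scope.

(* For D : {set L}, G_D is realised
   as the subgroup of elements supported on D, i.e. prod_{l in D} G_l. *)

Section Prod.
Variables (L : finType) (gT : L -> finGroupType).

Definition GDfactor (D : {set L}) (l : L) : {group gT l} :=
  if l \in D then [set: gT l]%G else 1%G.

Definition GD (D : {set L}) : {group {dffun forall l, gT l}} :=
  setXn_group (GDfactor D).

Definition projD (E : {set L}) (x : {dffun forall l, gT l})
  : {dffun forall l, gT l} :=
  finfun (fun l => if l \in E then x l else 1%g).

Definition imprimitive_char (D : {set L}) (i : Iirr (GD D)) : bool :=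
  [exists E : {set L}, (E \proper D) &&
    [exists j : Iirr (GD E),
      [forall x in GD D, 'chi_i x == 'chi_j (projD E x)]]].

Definition primitive_char (D : {set L}) (i : Iirr (GD D)) : bool :=
  ~~ imprimitive_char i.

Variables (X : finType) (rho : forall l, X -> {set gT l}).

Definition rhoD (D : {set L}) (v : X) : {set {dffun forall l, gT l}} :=
  [set x in GD D | [forall l, (l \in D) ==> (x l \in rho l v)]].

Definition cfclass_val (G : {group {dffun forall l, gT l}}) (phi : 'CF(G))
  (C : {set {dffun forall l, gT l}}) : algC := phi (repr C).

Definition mu (l : L) (U : {set {set gT l}}) : algC :=
  (#|[set: gT l]|%:R)^-1 * \sum_(C in U) (#|C|%:R).

End Prod.
Arguments imprimitive_char {L gT D} i.
Arguments primitive_char {L gT D} i.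

(* Test the large sieve inequality against the indicator vector a = 1_S.  For
   each l let theta_l be the union of the classes rho_l(S), of density
   m_l = mu_l(rho_l(S)) <= delta_l, and let g_l = (1_{theta_l} - m_l) / m_l.
   The class function F_D x = prod_{l in D} g_l(x_l) of G_D has sum zero in
   every coordinate, hence is orthogonal to all imprimitive characters; its
   norm is prod_{l in D} (1 - m_l) / m_l =: P(D), and it takes the value P(D)
   on rho_D(v) for every v in S.  Expanding F_D in the primitive characters
   gives sum_D sum_chi <F_D, chi> (sum_{v in S} chi(rho_D v)) = |S| sum_D P(D);
   bounding each term by (|S| |<F_D, chi>|^2 + |S|^-1 |sum_{v in S} chi(rho_D v)|^2) / 2
   and using the large sieve bound for the second sum yields
   |S| sum_D P(D) <= Delta.  Finally (1 - delta) / delta <= (1 - m) / m. *)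

From HB Require Import structures.
From mathcomp Require Import all_boot all_order all_algebra all_fingroup all_solvable all_field all_character.
From mathcomp Require Import ring.
Set Implicit Arguments. Unset Strict Implicit. Unset Printing Implicit Defensive.
Import Order.TTheory GRing.Theory Num.Theory.
Local Open Scope ring_scope.

Lemma sum_setXn_prod (R : comPzSemiRingType) (I : finType) (T : I -> finType)
    (A : forall i, {set T i}) (f : forall i, T i -> R) :
  \sum_(x in setXn A) \prod_i f i (x i) = \prod_i \sum_(y in A i) f i y.
Proof.
pose J := {i : I & T i}.
pose phi (j : J) := f (tag j) (tagged j).
pose Q i : pred J := fun j => (tag j == i) && (tagged j \in A (tag j)).
have sum_tagged i : \sum_(y in A i) f i y = \sum_(j | Q i j) phi j.
  rewrite -[LHS](big_imset phi (h := Tagged T)) /=; last first.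
    by move=> y1 y2 _ _; apply: eq_from_Tagged.
  apply: eq_bigl => j; apply/imsetP/idP => [[y Ay ->]|]; first by rewrite /Q /= eqxx.
  by case: j => i' y /andP [/= /eqP <- Ay]; exists y.
under eq_bigr do rewrite sum_tagged.
rewrite bigA_distr_big_dep.
pose h (x : {dffun forall i, T i}) : {ffun I -> J} := [ffun i => Tagged T (x i)].
have h_inj : injective h.
  move=> x1 x2 /ffunP eq_h; apply/ffunP => i.
  by have := eq_h i; rewrite !ffunE; apply: eq_from_Tagged.
transitivity (\sum_(u in h @: setXn A) \prod_i phi (u i)).
  rewrite big_imset /=; last by move=> x1 x2 _ _; apply: h_inj.
  by apply: eq_bigr => x _; apply: eq_bigr => i _; rewrite /phi ffunE.
apply: eq_bigl => u; apply/imsetP/familyP => [[x Ax ->] i|Qu].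
  by rewrite /h ffunE unfold_in /= eqxx (setXnP Ax).
have tag_u i : tag (u i) = i by case/andP: (Qu i) => /eqP.
exists ([ffun i => etagged (tag_u i)] : {dffun forall i, T i}).
  apply/setXnP => i; rewrite ffunE; case/andP: (Qu i) => _.
  by move: (tag_u i); case: (u i) => i' y /= e; case: _ / e.
by apply/ffunP => i; rewrite /h !ffunE etaggedK.
Qed.

Lemma natr_card_neq0 (G : finGroupType) : (#|G|%:R : algC) != 0.
Proof. by rewrite pnatr_eq0 -cardsT -lt0n cardG_gt0. Qed.

Section ProductGroup.
Variables (L : finType) (gT : L -> finGroupType).
Local Notation GT := {dffun forall l, gT l}.
Implicit Types (D : {set L}) (x : GT).

Lemma card_GD D : #|GD gT D| = (\prod_(l in D) #|gT l|)%N.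
Proof.
rewrite /GD /= cardsXn [RHS]big_mkcond; apply: eq_bigr => l _.
by rewrite /GDfactor; case: ifP; rewrite ?cardsT ?cards1.
Qed.

Lemma GD_memP D x : reflect (forall l, l \notin D -> x l = 1%g) (x \in GD gT D).
Proof.
rewrite /GD /= in_setXn; apply: (iffP forallP) => [Gx l lD|x1 l].
  by have := Gx l; rewrite /GDfactor (negPf lD) => /set1P.
by rewrite /GDfactor; case: ifP => [_|/negbT/x1 ->]; rewrite ?inE.
Qed.

Lemma dfung1_GD D l (y : gT l) : l \in D -> dfung1 y \in GD gT D.
Proof.
move=> lD; apply/GD_memP => l' l'D; apply: dfung1_dflt.
by apply: contraNneq l'D => <-.
Qed.

Lemma sum_GD_prod (R : comPzSemiRingType) D (h : forall l, gT l -> R) :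
  \sum_(x in GD gT D) \prod_(l in D) h l (x l) = \prod_(l in D) \sum_y h l y.
Proof.
pose h' l y := if l \in D then h l y else 1.
transitivity (\sum_(x in GD gT D) \prod_l h' l (x l)).
  by apply: eq_bigr => x _; rewrite big_mkcond.
rewrite [LHS](sum_setXn_prod _ h') [RHS]big_mkcond; apply: eq_bigr => l _.
rewrite /h' /GDfactor; case: ifP => lD /=; first by apply: eq_bigl => y; rewrite inE.
by rewrite big_set1.
Qed.

Variable g : forall l, gT l -> algC.
Hypothesis gJ : forall l (y z : gT l), g (y ^ z)%g = g y.

Fact cfprod_is_class D :
  is_class_fun <<GD gT D>>%g
    [ffun x => if x \in GD gT D then \prod_(l in D) g (x l) else 0].
Proof.
rewrite genGid; apply: intro_class_fun => [x y Gx Gy|x /negPf->//].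
rewrite groupJ // Gx; apply: eq_bigr => l _.
by rewrite /conjg !mulg_ffun invg_ffun gJ.
Qed.

Definition cfprod D : 'CF(GD gT D) := Cfun 0 (cfprod_is_class D).

Lemma cfprodE D x : x \in GD gT D -> cfprod D x = \prod_(l in D) g (x l).
Proof. by rewrite cfunE => ->. Qed.

Lemma cfnorm_cfprod D :
  '[cfprod D] = \prod_(l in D) (#|gT l|%:R^-1 * \sum_(y : gT l) g y * (g y)^*).
Proof.
rewrite cfdotE (eq_bigr (fun x => \prod_(l in D) (g (x l) * (g (x l))^*)));
  last by move=> x Gx; rewrite cfprodE // rmorph_prod -big_split.
rewrite (sum_GD_prod _ (fun l (y : gT l) => g y * (g y)^*)) big_split /=.
by rewrite card_GD natr_prod prodfV.
Qed.

Hypothesis g_sum0 : forall l, \sum_(y : gT l) g y = 0.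

Lemma cfdot_cfprod_imprimitive D (i : Iirr (GD gT D)) :
  imprimitive_char i -> '[cfprod D, 'chi_i] = 0.
Proof.
case/existsP => E /andP [ltED /existsP [j /forallP chi_ij]].
(* Translating the l-th coordinate, for some l in D \ E, fixes 'chi_i and
   averages the l-th factor of cfprod D to zero. *)
have [_ [l lD lNE]] := properP ltED.
pose Phi x := cfprod D x * ('chi_j (projD E x))^*.
have cfprod_out x : x \notin GD gT D -> cfprod D x = 0 by rewrite cfunE => /negPf->.
have -> : '[cfprod D, 'chi_i] = #|GD gT D|%:R^-1 * \sum_x Phi x.
  rewrite cfdotE big_mkcond; congr (_ * _); apply: eq_bigr => x _.
  case: ifP => [Gx | /negbT/cfprod_out]; last by rewrite /Phi => ->; rewrite mul0r.
  by move/implyP: (chi_ij x) => /(_ Gx)/eqP->.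
suff sum_shift x : \sum_(y : gT l) Phi (x * dfung1 y)%g = 0.
  suff -> : \sum_x Phi x = 0 by rewrite mulr0.
  apply: (mulfI (natr_card_neq0 (gT l))); rewrite mulr0 mulr_natl -sumr_const.
  under eq_bigr => y _ do rewrite (reindex_inj (mulIg (dfung1 y))).
  by rewrite exchange_big big1.
have [Gx|nGx] := boolP (x \in GD gT D); last first.
  by apply: big1 => y _; rewrite /Phi cfprod_out ?mul0r // groupMr ?dfung1_GD.
pose rest := \prod_(l' in D | l' != l) g (x l') * ('chi_j (projD E x))^*.
transitivity (\sum_(y : gT l) g (x l * y)%g * rest).
  apply: eq_bigr => y _.
  rewrite /Phi cfprodE ?groupMr ?dfung1_GD // (bigD1 l lD) /= -mulrA /rest.
  rewrite mulg_ffun dfung1_id; congr (_ * (_ * _^*)).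
    apply: eq_bigr => l' /andP [_ l'l].
    by rewrite mulg_ffun dfung1_dflt 1?eq_sym // mulg1.
  congr ('chi_j _); apply/ffunP => l'; rewrite !ffunE.
  case: ifP => // l'E; rewrite dfwith_out ?mulg1 //.
  by apply: contraNneq lNE => ->.
rewrite -mulr_suml (_ : \sum_(y : gT l) g (x l * y)%g = 0) ?mul0r //.
by rewrite -[RHS](g_sum0 l) [RHS](reindex_inj (mulgI (x l))).
Qed.

End ProductGroup.

Section BalancedIndicator.
Variables (G : finGroupType) (A : {set G}).

Definition density : algC := #|A|%:R / #|G|%:R.

Definition balanced_ind (y : G) : algC := ((y \in A)%:R - density) / density.

Lemma sum_indicator : \sum_(y : G) ((y \in A)%:R : algC) = #|A|%:R.
Proof.
rewrite -sum1_card natr_sum [RHS]big_mkcond; apply: eq_bigr => y _.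
by case: (y \in A).
Qed.

Lemma sum_balanced_ind : \sum_y balanced_ind y = 0.
Proof.
rewrite -mulr_suml sumrB sum_indicator sumr_const -[X in _ - X]mulr_natr /density.
by rewrite divfK ?natr_card_neq0 // subrr mul0r.
Qed.

Lemma balanced_ind_in y : y \in A -> balanced_ind y = (1 - density) / density.
Proof. by rewrite /balanced_ind => ->. Qed.

Hypothesis A0 : A != set0.

Lemma density_gt0 : 0 < density.
Proof.
by rewrite divr_gt0 // ltr0n lt0n ?cards_eq0 // -cardsT -lt0n cardG_gt0.
Qed.

Lemma balanced_ind_norm :
  #|G|%:R^-1 * \sum_y balanced_ind y * (balanced_ind y)^* = (1 - density) / density.
Proof.
have m_neq0 : density != 0 by rewrite gt_eqF ?density_gt0.
have sq y : balanced_ind y * (balanced_ind y)^* =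
    (y \in A)%:R * ((1 - 2 * density) / density ^+ 2) + 1.
  rewrite /balanced_ind fmorph_div rmorphB /= !rmorph_nat conj_Creal.
    by case: (y \in A) => /=; field.
  by rewrite /density rpred_div ?rpred_nat.
under eq_bigr do rewrite sq.
rewrite big_split /= -mulr_suml sum_indicator sumr_const -[X in _ + X]mulr_natr.
have cardA : #|A|%:R = density * #|G|%:R by rewrite divfK ?natr_card_neq0.
rewrite cardA mul1r; have := natr_card_neq0 G; move: (#|G|%:R : algC) => n n0.
by field; rewrite m_neq0 n0.
Qed.

End BalancedIndicator.

Lemma mu_cover (L : finType) (gT : L -> finGroupType) l (U : {set {set gT l}}) :
  U \subset classes [set: gT l] -> mu U = density (cover U).
Proof.
move=> Ucl; rewrite /mu /density mulrC cardsT; congr (_ / _).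
have /and3P [_ tIcl _] := classes_partition [set: gT l].
by rewrite -(eqP (trivIsetS Ucl tIcl)) natr_sum.
Qed.

Lemma ler_norm_mul_amgm (R : numFieldType) (p q s : R) : 0 < s ->
  `|p * q| <= (s * `|p| ^+ 2 + s^-1 * `|q| ^+ 2) / 2.
Proof.
move=> s_gt0; rewrite ler_pdivlMr ?ltr0n // -subr_ge0 normrM.
have -> : s * `|p| ^+ 2 + s^-1 * `|q| ^+ 2 - `|p| * `|q| * 2 =
          (s * `|p| - `|q|) ^+ 2 / s by field; rewrite gt_eqF.
apply: divr_ge0; last exact: ltW.
by apply: real_exprn_even_ge0; rewrite // rpredB ?rpredM ?normr_real ?gtr0_real.
Qed.

Lemma ler_sum_amgm (R : numFieldType) (I : Type) (r : seq I) (P : pred I)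
    (x a b : I -> R) (s : R) :
  (forall i, P i -> x i <= (s * a i + s^-1 * b i) / 2) ->
  \sum_(i <- r | P i) x i <=
    (s * \sum_(i <- r | P i) a i + s^-1 * \sum_(i <- r | P i) b i) / 2.
Proof.
move=> x_le; apply: le_trans (ler_sum _ x_le) _.
by rewrite -mulr_suml big_split /= !mulr_sumr.
Qed.

Lemma odds_antitone (R : numFieldType) (m d : R) :
  0 < m -> m <= d -> d <= 1 -> 0 <= (1 - d) / d <= (1 - m) / m.
Proof.
move=> m_gt0 le_md d_le1; have d_gt0 := lt_le_trans m_gt0 le_md.
apply/andP; split; first by rewrite divr_ge0 ?subr_ge0 // ltW.
by rewrite !mulrBl !mul1r !divff ?gt_eqF // lerD2r lef_pV2 ?posrE.
Qed.

Section PrimitiveExpansion.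
Variables (L : finType) (gT : L -> finGroupType).
Variables (D : {set L}) (phi : 'CF(GD gT D)).
Hypothesis phi_imprim :
  forall i : Iirr (GD gT D), imprimitive_char i -> '[phi, 'chi_i] = 0.

Lemma cfun_sum_primitive :
  phi = \sum_(i | primitive_char i) '[phi, 'chi_i] *: 'chi_i.
Proof.
rewrite {1}(cfun_sum_cfdot phi) (bigID primitive_char) /= addrC big1 ?add0r //.
by move=> i /negbNE /phi_imprim ->; rewrite scale0r.
Qed.

Lemma cfnorm_primitive :
  '[phi] = \sum_(i | primitive_char i) `|'[phi, 'chi_i]| ^+ 2.
Proof.
rewrite cfdot_sum_irr (bigID primitive_char) /= addrC big1 ?add0r.
  by apply: eq_bigr => i _; rewrite normCK.
by move=> i /negbNE /phi_imprim ->; rewrite mul0r.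
Qed.

End PrimitiveExpansion.

Lemma mem_classJ (G : finGroupType) (C : {set G}) (y z : G) :
  C \in classes [set: G] -> ((y ^ z)%g \in C) = (y \in C).
Proof.
case/imsetP => x _ ->; apply: memJ_norm.
by apply: (subsetP (class_norm _ _)); rewrite inE.
Qed.

Lemma mem_cover_classesJ (G : finGroupType) (U : {set {set G}}) (y z : G) :
  U \subset classes [set: G] -> ((y ^ z)%g \in cover U) = (y \in cover U).
Proof.
move=> Ucl; apply/bigcupP/bigcupP => -[C UC yC]; exists C => //.
  by rewrite -(mem_classJ y z (subsetP Ucl C UC)).
by rewrite (mem_classJ y z (subsetP Ucl C UC)).
Qed.

Lemma repr_class_mem (G : finGroupType) (C : {set G}) :
  C \in classes [set: G] -> repr C \in C.
Proof. by case/imsetP => x _ ->; apply: (mem_repr x); apply: class_refl. Qed.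

Section LargeSieveDual.
Variables (L : finType) (gT : L -> finGroupType) (X : finType).
Variable rho : forall l, X -> {set gT l}.
Hypothesis rho_class : forall l v, rho l v \in classes [set: gT l].

Lemma repr_rhoD (D : {set L}) v : repr (rhoD rho D v) \in rhoD rho D v.
Proof.
pose w : {dffun forall l, gT l} := [ffun l => if l \in D then repr (rho l v) else 1%g].
apply: (mem_repr w).
rewrite inE; apply/andP; split.
  by apply/GD_memP => l /negPf lD; rewrite ffunE lD.
by apply/forallP => l; apply/implyP => lD; rewrite ffunE lD repr_class_mem.
Qed.

Lemma sum_cfdot_primitive_classes (D : {set L}) (F : 'CF(GD gT D)) (b : X -> algC) :
    (forall i : Iirr (GD gT D), imprimitive_char i -> '[F, 'chi_i] = 0) ->
  \sum_(i | primitive_char i)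
     '[F, 'chi_i] * \sum_v b v * cfclass_val 'chi_i (rhoD rho D v)
  = \sum_v b v * cfclass_val F (rhoD rho D v).
Proof.
move=> F_imprim; under eq_bigr do rewrite mulr_sumr.
rewrite exchange_big /=; apply: eq_bigr => v _.
rewrite [in RHS](cfun_sum_primitive F_imprim) /cfclass_val sum_cfunE mulr_sumr.
by apply: eq_bigr => i _; rewrite cfunE mulrCA.
Qed.

Variables (Z : {set {set L}}) (Delta : algC).
Hypothesis Delta_ge0 : 0 <= Delta.
Hypothesis Delta_bound : forall a : X -> algC,
  \sum_(D in Z) \sum_(i : Iirr (GD gT D) | primitive_char i)
     `| \sum_(v : X) a v * cfclass_val 'chi_i (rhoD rho D v) | ^+ 2
  <= Delta * \sum_(v : X) `|a v| ^+ 2.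

Lemma large_sieve_dual (S : {set X}) (F : forall D, 'CF(GD gT D))
    (P : {set L} -> algC) :
  (forall D (i : Iirr (GD gT D)), imprimitive_char i -> '[F D, 'chi_i] = 0) ->
  (forall D, '[F D] = P D) ->
  (forall D v, v \in S -> cfclass_val (F D) (rhoD rho D v) = P D) ->
  (\sum_(D in Z) P D) * #|S|%:R <= Delta.
Proof.
move=> F_imprim F_norm F_S.
have [->|[v0 Sv0]] := set_0Vmem S; first by rewrite cards0 mulr0.
have s_gt0 : 0 < (#|S|%:R : algC) by rewrite ltr0n; apply/card_gt0P; exists v0.
pose a v : algC := (v \in S)%:R.
pose c D i := '[F D, 'chi[GD gT D]_i].
pose T D i := \sum_(v : X) a v * cfclass_val 'chi[GD gT D]_i (rhoD rho D v).
have sum_c : \sum_(D in Z) \sum_(i | primitive_char i) `|c D i| ^+ 2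
    = \sum_(D in Z) P D.
  by apply: eq_bigr => D _; rewrite -F_norm (cfnorm_primitive (F_imprim D)).
have norm_a : \sum_v `|a v| ^+ 2 = #|S|%:R.
  rewrite -sum1_card natr_sum [RHS]big_mkcond; apply: eq_bigr => v _.
  by rewrite /a; case: (v \in S); rewrite /= ?normr1 ?normr0 ?expr1n ?expr0n.
have sum_T : \sum_(D in Z) \sum_(i | primitive_char i) `|T D i| ^+ 2
    <= Delta * #|S|%:R by rewrite -norm_a; apply: Delta_bound.
have sum_cT : \sum_(D in Z) \sum_(i | primitive_char i) c D i * T D i
    = #|S|%:R * \sum_(D in Z) P D.
  rewrite mulr_sumr; apply: eq_bigr => D _.
  rewrite (sum_cfdot_primitive_classes _ (F_imprim D)).
  rewrite -sum1_card natr_sum mulr_suml [RHS]big_mkcond.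
  apply: eq_bigr => v _; rewrite /a; case: ifP => Sv; last by rewrite mulr0n !mul0r.
  by rewrite F_S // mulr1n !mul1r.
have Lm_ge0 : 0 <= \sum_(D in Z) P D.
  by rewrite -sum_c !sumr_ge0 // => D _; rewrite sumr_ge0 // => i _; rewrite exprn_ge0.
have amgm : #|S|%:R * \sum_(D in Z) P D <=
    (#|S|%:R * \sum_(D in Z) P D + #|S|%:R^-1 * (Delta * #|S|%:R)) / 2.
  rewrite -[X in X <= _](ger0_norm (mulr_ge0 (ltW s_gt0) Lm_ge0)) -{1}sum_cT -sum_c.
  apply: le_trans (ler_norm_sum _ _ _) _.
  pose c2 D := \sum_(i : Iirr (GD gT D) | primitive_char i) `|c D i| ^+ 2.
  pose T2 D := \sum_(i : Iirr (GD gT D) | primitive_char i) `|T D i| ^+ 2.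
  apply: le_trans (@ler_sum_amgm _ _ _ _ _ c2 T2 #|S|%:R _) _ => [D _|].
    apply: le_trans (ler_norm_sum _ _ _) _.
    by apply: ler_sum_amgm => i _; apply: ler_norm_mul_amgm.
  rewrite ler_wpM2r ?invr_ge0 ?ler0n // lerD // ler_wpM2l // invr_ge0 ltW //.
rewrite mulrC; move: amgm; rewrite mulrCA mulVf ?mulr1 ?gt_eqF //.
by rewrite ler_pdivlMr ?ltr0n // mulr_natr mulr2n lerD2l.
Qed.

End LargeSieveDual.

Theorem theorem2p1 (X L : finType) (gT : L -> finGroupType)
  (rho : forall l, X -> {set gT l})
  (hrho : forall l v, rho l v \in classes [set: gT l])
  (Z : {set {set L}})
  (Delta : algC)
  (hDelta_bound : forall a : X -> algC,
     \sum_(D in Z) \sum_(i : Iirr (GD gT D) | primitive_char i)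
        `| \sum_(v : X) a v * cfclass_val 'chi_i (rhoD rho D v) | ^+ 2
     <= Delta * \sum_(v : X) `|a v| ^+ 2)
  (hDelta_least : forall Delta' : algC, 0 <= Delta' ->
     (forall a : X -> algC,
       \sum_(D in Z) \sum_(i : Iirr (GD gT D) | primitive_char i)
          `| \sum_(v : X) a v * cfclass_val 'chi_i (rhoD rho D v) | ^+ 2
       <= Delta' * \sum_(v : X) `|a v| ^+ 2) ->
     Delta <= Delta')
  (hDelta0 : 0 <= Delta)
  (S : {set X}) (delta : L -> algC)
  (hdelta : forall l, 0 < delta l <= 1)
  (hmu : forall l, mu [set rho l v | v in S] <= delta l) :
  (\sum_(D in Z) \prod_(l in D) ((1 - delta l) / delta l)) * #|S|%:R <= Delta.
Proof.
have [->|[v0 Sv0]] := set_0Vmem S; first by rewrite cards0 mulr0.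
pose th l := cover [set rho l v | v in S].
have th_classes l : [set rho l v | v in S] \subset classes [set: gT l].
  by apply/subsetP => _ /imsetP [v _ ->]; apply: hrho.
have th0 l : th l != set0.
  apply/set0Pn; exists (repr (rho l v0)); apply/bigcupP; exists (rho l v0).
    exact: imset_f.
  exact: repr_class_mem.
pose m l := density (th l).
have m_le l : m l <= delta l by rewrite /m /th -mu_cover ?th_classes.
have gJ l (y z : gT l) : balanced_ind (th l) (y ^ z)%g = balanced_ind (th l) y.
  by rewrite /balanced_ind mem_cover_classesJ ?th_classes.
apply: le_trans (_ : (\sum_(D in Z) \prod_(l in D) ((1 - m l) / m l)) * #|S|%:R <= _).
  rewrite ler_wpM2r ?ler0n // ler_sum // => D _; rewrite ler_prod // => l _.
  by case/andP: (hdelta l) => _; apply: odds_antitone; rewrite ?density_gt0.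
apply: (large_sieve_dual hDelta0 hDelta_bound (F := cfprod gJ)) => [D i|D|D v Sv].
- by apply: cfdot_cfprod_imprimitive => l; apply: sum_balanced_ind.
- by rewrite cfnorm_cfprod; apply: eq_bigr => l _; rewrite balanced_ind_norm.
have /setIdP [GDx /forallP rho_x] := repr_rhoD hrho D v.
rewrite /cfclass_val cfprodE //; apply: eq_bigr => l lD; apply: balanced_ind_in.
by apply/bigcupP; exists (rho l v); [apply: imset_f | apply: (implyP (rho_x l))].
Qed.
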